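(* Let $n\ge 5$ and let $G$ be a graph on $n$ vertices with non-negative integer edge weights such that every subgraph spanned by at least $4$ vertices has total weight at least $3$. Then there is a vertex $v$ of $G$ with $d(v)\ge \tfrac{2}{3}n-\tfrac{4}{3}$.
   Context: The total weight of a subgraph is the sum of its edge weights; the subgraph spanned by a vertex set consists of those vertices and all edges between them. For a vertex $v$, $d(v)=\sum_{u\ne v}\operatorname{wt}(uv)$ is the sum of the weights of edges incident to $v$ (a missing edge has weight $0$). *)

From mathcomp Require Import all_boot.
Set Implicit Arguments. Unset Strict Implicit. Unset Printing Implicit Defensive.

(* A graph on vertex set 'I_n with non-negative integer edge weights:
   w u v is the weight of edge uv (0 = missing edge); w is symmetric,
   and values on the diagonal are ignored (no loops). *)
Definition sym_weight (n : nat) (w : 'I_n -> 'I_n -> nat) : Prop :=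
  forall u v, w u v = w v u.

Definition span_weight (n : nat) (w : 'I_n -> 'I_n -> nat) (S : {set 'I_n}) : nat :=
  \sum_(u in S) \sum_(v in S | u < v) w u v.

Definition wdeg (n : nat) (w : 'I_n -> 'I_n -> nat) (v : 'I_n) : nat :=
  \sum_(u | u != v) w u v.

From mathcomp Require Import all_boot zify.
Set Implicit Arguments. Unset Strict Implicit. Unset Printing Implicit Defensive.

(* Fix a vertex v and let N be its non-neighbours; d(v) >= n - 1 - |N|, so we
   may assume 3|N| > n + 1. Take u in N. If u has weight at least 2 to every
   other vertex of N, then d(u) >= 2(|N| - 1) suffices. Otherwise some z in N
   has wt(uz) <= 1, so the triangle T = {u, v, z} spans weight t <= 1. By the
   hypothesis on 4-sets every vertex outside T sends weight at least 3 - t into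
   T, hence the degrees of T sum to at least 2t + (n - 3)(3 - t) >= 2n - 4 and
   one of them is at least (2n - 4)/3. *)

Lemma exists_sum_le_card_mul (T : finType) (A : {set T}) (F : T -> nat) :
  A != set0 -> exists2 x, x \in A & \sum_(y in A) F y <= #|A| * F x.
Proof.
case/set0Pn=> x0 Ax0; case: (arg_maxnP F Ax0) => x Ax maxF.
by exists x => //; rewrite -sum_nat_const; apply: leq_sum.
Qed.

Section WeightedGraph.

Variables (n : nat) (w : 'I_n -> 'I_n -> nat).

Definition non_nbrs (v : 'I_n) : {set 'I_n} := [set u | (u != v) && (w u v == 0)].

Lemma wdeg_non_nbrs (v : 'I_n) : n.-1 <= wdeg w v + #|non_nbrs v|.
Proof.
have -> : #|non_nbrs v| = \sum_(u | u != v) (w u v == 0).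
  rewrite -sum1_card big_mkcond [RHS]big_mkcond; apply: eq_bigr => u _.
  by rewrite inE; case: (u != v).
have -> : n.-1 = \sum_(u | u != v) 1.
  by rewrite sum1_card cardC1 card_ord.
rewrite /wdeg -big_split /=.
by apply: leq_sum => u _; case: (w u v).
Qed.

Lemma leq_sum_wdeg (v : 'I_n) (A : {set 'I_n}) :
  v \notin A -> \sum_(u in A) w u v <= wdeg w v.
Proof.
move=> vA; rewrite /wdeg [X in _ <= X](bigID (mem A)) /=.
rewrite [X in _ <= X + _](eq_bigl (mem A)) ?leq_addr // => u; rewrite andbC /=.
by case: (boolP (u \in A)) => // uA; apply: contraNneq vA => <-.
Qed.

Lemma leq_mul_card_wdeg (k : nat) (v : 'I_n) (A : {set 'I_n}) :
  v \notin A -> {in A, forall u, k <= w u v} -> k * #|A| <= wdeg w v.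
Proof.
move=> vA heavy; apply: leq_trans (leq_sum_wdeg vA).
by rewrite mulnC -sum_nat_const; apply: leq_sum.
Qed.

Hypothesis w_sym : sym_weight w.

Lemma span_weightU1 (a : 'I_n) (S : {set 'I_n}) : a \notin S ->
  span_weight w (a |: S) = span_weight w S + \sum_(v in S) w a v.
Proof.
move=> aS; have splitU1 (u : 'I_n) : \sum_(v in a |: S | u < v) w u v =
    (if u < a then w u a else 0) + \sum_(v in S | u < v) w u v.
  by rewrite big_mkcondr big_setU1 //= -big_mkcondr.
rewrite /span_weight big_setU1 //= splitU1 ltnn add0n.
rewrite (eq_bigr _ (fun u _ => splitU1 u)) big_split /= addnA addnC; congr (_ + _).
rewrite big_mkcondr -big_split /=; apply: eq_bigr => u uS.
have ua : u != a by apply: contraNneq aS => <-.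
case: ltngtP => [_|_|/val_inj eq_au]; rewrite ?addn0 ?add0n //.
by rewrite eq_au eqxx in ua.
Qed.

Lemma double_span_weight (S : {set 'I_n}) :
  2 * span_weight w S = \sum_(v in S) \sum_(u in S | u != v) w u v.
Proof.
have split_ne (v : 'I_n) : \sum_(u in S | u != v) w u v =
    \sum_(u in S) (if u < v then w u v else 0) + \sum_(u in S | v < u) w v u.
  rewrite -big_mkcondr (bigID (fun u : 'I_n => u < v)) /=.
  congr (_ + _); apply: eq_big => u; rewrite -?andbA -?val_eqE /=.
  - by congr (_ && _); case: ltngtP.
  - by [].
  - by congr (_ && _); case: ltngtP.
  - by rewrite w_sym.
rewrite (eq_bigr _ (fun v _ => split_ne v)) big_split /= exchange_big /=.
by rewrite mul2n -addnn /span_weight; congr (_ + _); apply: eq_bigr => u _; rewrite big_mkcondr.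
Qed.

Lemma span_weight3 (a b c : 'I_n) : a != b -> a != c -> b != c ->
  span_weight w (a |: [set b; c]) = w a b + w a c + w b c.
Proof.
move=> ab ac bc; have span1 : span_weight w [set c] = 0.
  by rewrite /span_weight big_set1 big1 // => u /andP[/set1P -> ]; rewrite ltnn.
rewrite span_weightU1 ?span_weightU1 ?span1 ?big_setU1 ?big_set1 ?inE ?negb_or ?ab ?ac ?bc //.
by rewrite addnC.
Qed.

Lemma wdeg_split (S : {set 'I_n}) (v : 'I_n) : v \in S ->
  wdeg w v = \sum_(u in S | u != v) w u v + \sum_(u in ~: S) w u v.
Proof.
move=> vS; rewrite /wdeg (bigID (mem S)) /=; congr (_ + _); apply: eq_bigl => u.
  by rewrite andbC.
rewrite inE andbC; case: (boolP (u \in S)) => //= uS.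
by apply: contraNneq uS => ->.
Qed.

Lemma sum_wdeg (S : {set 'I_n}) : \sum_(v in S) wdeg w v =
  2 * span_weight w S + \sum_(u in ~: S) \sum_(v in S) w u v.
Proof.
rewrite (eq_bigr _ (fun v vS => wdeg_split vS)) big_split /=.
by rewrite double_span_weight exchange_big.
Qed.

Hypothesis w_span4 : forall S : {set 'I_n}, 4 <= #|S| -> 3 <= span_weight w S.

Lemma sum_wdeg_card3 (T : {set 'I_n}) : #|T| = 3 ->
  2 * span_weight w T + (n - 3) * (3 - span_weight w T) <= \sum_(v in T) wdeg w v.
Proof.
move=> T3; rewrite sum_wdeg leq_add2l.
have -> : n - 3 = #|~: T| by rewrite -T3 -[n in n - _](card_ord n) -(cardsC T) addKn.
rewrite -sum_nat_const; apply: leq_sum => u; rewrite inE => uT.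
have := @w_span4 (u |: T); rewrite cardsU1 uT T3 span_weightU1 // => /(_ isT).
by rewrite leq_subLR.
Qed.

Lemma exists_wdeg_large_card3 (T : {set 'I_n}) : 5 <= n -> #|T| = 3 ->
  span_weight w T <= 1 -> exists v, 2 * n <= 3 * wdeg w v + 4.
Proof.
move=> n_ge5 T3 light.
have [|v _ le_sum_v] := exists_sum_le_card_mul (wdeg w) (A := T).
  by rewrite -card_gt0 T3.
exists v; move: le_sum_v (sum_wdeg_card3 T3); rewrite T3.
by case: (span_weight w T) light => [|[|]] //= _; lia.
Qed.

End WeightedGraph.

Theorem lemma7p6 (n : nat) (w : 'I_n -> 'I_n -> nat) :
  5 <= n ->
  sym_weight w ->
  (forall S : {set 'I_n}, 4 <= #|S| -> 3 <= span_weight w S) ->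
  exists v : 'I_n, 2 * n <= 3 * wdeg w v + 4.
Proof.
move=> n_ge5 w_sym w_span4.
pose v : 'I_n := Ordinal (leq_trans (isT : 0 < 5) n_ge5).
have deg_v := wdeg_non_nbrs w v.
have [|N_big] := leqP (3 * #|non_nbrs w v|) n.+1; first by exists v; lia.
have [u uN] : exists u, u \in non_nbrs w v by apply/set0Pn; rewrite -card_gt0; lia.
move: (uN); rewrite inE => /andP[u_v /eqP wuv].
have [/exists_inP[z]|] := boolP [exists z in non_nbrs w v :\ u, w u z <= 1].
  rewrite !inE => /andP[z_u /andP[z_v /eqP wzv]] wuz.
  have [v_u v_z u_z] : [/\ v != u, v != z & u != z] by rewrite eq_sym (eq_sym v z) (eq_sym u z).
  apply: (exists_wdeg_large_card3 w_sym w_span4 (T := v |: [set u; z]) n_ge5).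
    by rewrite cardsU1 cards2 !inE negb_or v_u v_z u_z.
  by rewrite span_weight3 // (w_sym v u) (w_sym v z) wuv wzv.
rewrite negb_exists_in => /forall_inP heavy; exists u.
have : 2 * #|non_nbrs w v :\ u| <= wdeg w u.
  by apply: leq_mul_card_wdeg (negbT (setD11 u _)) _ => z /heavy; rewrite w_sym ltnNge.
by have := cardsD1 u (non_nbrs w v); rewrite uN; lia.
Qed.
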